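(* Suppose $z\in\mathbb{Z}[i]\setminus\{0\}$ is $2$-powerfully unitarily $t$-perfect in $\mathbb{Z}[i]$ for some integer $t\ge 2$, i.e. $I_2^*(z)=t$. Then we may write $z=(1+i)^{\gamma}x$ with $\gamma$ a nonnegative integer, $x\in\mathbb{Z}[i]$ and $N(x)=x\bar x$ odd. Moreover, $x$ has exactly $\gamma+\upsilon_2(t)$ pairwise nonassociated prime divisors, where $\upsilon_2(t)$ is the exponent of $2$ in $t$.
   Context: Work in the Gaussian integers $\mathbb{Z}[i]=\mathcal O_{\mathbb{Q}(\sqrt{-1})}$, a unique factorization domain. $|z|=\sqrt{z\bar z}$, $\arg(z)\in[0,2\pi)$. Let $A$ be the set of nonzero $z\in\mathbb{Z}[i]$ with $0\le \arg(z)<\pi/2$. Two elements are relatively prime if they have no nonunit common divisor. For nonzero $x,z$, write $x\Diamond z$ iff $x\in A$, $x\mid z$, and $x$ is relatively prime to $z/x$. For $m\in\mathbb{Z}$ define $\delta_m^*(z)=\sum_{x\Diamond z}|x|^m$ and $I_m^*(z)=\delta_m^*(z)/|z|^m$. *)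

(* Gaussian integers Z[i] represented as pairs (a,b) = a + b i. *)
From mathcomp Require Import all_boot all_order all_algebra.
From Stdlib Require ClassicalEpsilon.
Set Implicit Arguments. Unset Strict Implicit. Unset Printing Implicit Defensive.
Import Order.TTheory GRing.Theory Num.Theory.
Local Open Scope ring_scope.

Definition gauss := (int * int)%type.

Definition gauss0 : gauss := (0, 0).
Definition gauss1 : gauss := (1, 0).
Definition gaussD (x y : gauss) : gauss := (x.1 + y.1, x.2 + y.2).
Definition gaussM (x y : gauss) : gauss :=
  (x.1 * y.1 - x.2 * y.2, x.1 * y.2 + x.2 * y.1).
Definition gaussConj (x : gauss) : gauss := (x.1, - x.2).
Definition gaussN (x : gauss) : nat := absz (x.1 * x.1 + x.2 * x.2).
Definition gaussX (x : gauss) (n : nat) : gauss := iter n (gaussM x) gauss1.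
Definition one_plus_i : gauss := (1, 1).

Definition gdvd (x z : gauss) : Prop := exists y, z = gaussM x y.
Definition gunit (u : gauss) : Prop := exists v, gaussM u v = gauss1.
Definition gassoc (x y : gauss) : Prop := exists u, gunit u /\ x = gaussM u y.
Definition grelprime (x y : gauss) : Prop :=
  forall d, gdvd d x -> gdvd d y -> gunit d.
Definition gprime (p : gauss) : Prop :=
  p <> gauss0 /\ ~ gunit p /\ forall a b, gdvd p (gaussM a b) -> gdvd p a \/ gdvd p b.

(* A = nonzero z with 0 <= arg z < pi/2, i.e. Re z > 0 and Im z >= 0 *)
Definition inA (x : gauss) : Prop := 0 < x.1 /\ 0 <= x.2.

Definition diamond (x z : gauss) : Prop :=
  inA x /\ exists y, z = gaussM x y /\ grelprime x y.

Definition decP (P : Prop) : bool :=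
  if ClassicalEpsilon.excluded_middle_informative P then true else false.

(* For z <> 0 every
   x with x <> z satisfies x = (a,b), 0 < a, 0 <= b and N(x) <= N(z), so the
   sum over the box 0 <= a, b <= N(z) is the full (finite) sum. *)
Definition delta2star (z : gauss) : nat :=
  (\sum_(a < (gaussN z).+1) \sum_(b < (gaussN z).+1)
     (if decP (diamond ((a : nat)%:Z, (b : nat)%:Z) z)
      then gaussN ((a : nat)%:Z, (b : nat)%:Z) else 0%N))%N.

Definition I2star (z : gauss) : rat := (delta2star z)%:R / (gaussN z)%:R.

Definition num_prime_divisors (x : gauss) (k : nat) : Prop :=
  exists s : seq gauss,
    size s = k /\
    (forall p, p \in s -> gprime p /\ gdvd p x) /\
    (forall i j, (i < size s)%N -> (j < size s)%N -> i <> j ->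
        ~ gassoc (nth gauss0 s i) (nth gauss0 s j)) /\
    (forall p, gprime p -> gdvd p x -> exists2 q, q \in s & gassoc p q).

(* The proof rests on the multiplicativity of delta_2^*: if the prime p does not
   divide w, the unitary divisors of p^e w in A are those of w together with the
   associates in A of the p^e d, d a unitary divisor of w, so that
   delta_2^*(p^e w) = (1 + N(p)^e) delta_2^*(w).  A prime of odd norm has
   N(p) = 1 (mod 4), so 1 + N(p)^e is twice an odd number, whereas 1 + 2^e is odd
   for the prime 1 + i of norm 2.  Hence the exponent of 2 in delta_2^*(z) is the
   number of nonassociated primes of odd norm dividing z, i.e. of prime divisors
   of x; comparing it with the exponent of 2 in t N(z) = t 2^gamma N(x) gives
   gamma + v_2(t). *)

From Pilot Require Import Defs.
From mathcomp Require Import all_boot all_order all_algebra.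
From mathcomp Require Import zify ring.
From Stdlib Require Import ClassicalEpsilon.
Set Implicit Arguments. Unset Strict Implicit. Unset Printing Implicit Defensive.
Import Order.TTheory GRing.Theory Num.Theory.
Local Open Scope ring_scope.

Ltac gauss_ring :=
  rewrite /gaussM /gaussD /gauss1 /gauss0 /gaussConj /=;
  try (apply: injective_projections => /=); ring.

Lemma gaussE (x : gauss) : x = (x.1, x.2). Proof. by case: x. Qed.

Lemma gaussMA x y w : gaussM x (gaussM y w) = gaussM (gaussM x y) w.
Proof. gauss_ring. Qed.
Lemma gaussMC x y : gaussM x y = gaussM y x. Proof. gauss_ring. Qed.
Lemma gauss1M x : gaussM gauss1 x = x. Proof. rewrite [x]gaussE; gauss_ring. Qed.
Lemma gaussM1 x : gaussM x gauss1 = x. Proof. by rewrite gaussMC gauss1M. Qed.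
Lemma gaussM0 x : gaussM x gauss0 = gauss0. Proof. gauss_ring. Qed.

Definition gaussNz (x : gauss) : int := x.1 * x.1 + x.2 * x.2.

Lemma gaussNzE x : (gaussN x)%:Z = gaussNz x.
Proof. by rewrite /gaussN gez0_abs //; nia. Qed.

Lemma gaussNM x y : gaussN (gaussM x y) = (gaussN x * gaussN y)%N.
Proof.
by apply/eqP; rewrite -eqz_nat PoszM !gaussNzE /gaussNz /gaussM /=; apply/eqP; ring.
Qed.

Lemma gaussN_eq0 x : gaussN x = 0%N -> x = gauss0.
Proof.
move/(congr1 Posz); rewrite gaussNzE /gaussNz => N0.
by rewrite [x]gaussE; congr pair; nia.
Qed.

Lemma gaussN_gt0 x : x <> gauss0 -> (0 < gaussN x)%N.
Proof. by move=> x0; rewrite lt0n; apply/eqP => /gaussN_eq0. Qed.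

Lemma gaussM_neq0 x y : x <> gauss0 -> y <> gauss0 -> gaussM x y <> gauss0.
Proof.
move=> /gaussN_gt0 x0 /gaussN_gt0 y0 /(congr1 gaussN) E.
by move: (muln_gt0 (gaussN x) (gaussN y)); rewrite x0 y0 -gaussNM E.
Qed.

Lemma gaussMI x : x <> gauss0 -> injective (gaussM x).
Proof.
move=> x0 y w Exyw; set d : gauss := (y.1 - w.1, y.2 - w.2).
have /gaussN_eq0 xd0 : gaussN (gaussM x d) = 0%N.
  apply/eqP; rewrite -eqz_nat gaussNzE /gaussNz /d /=.
  by move: Exyw; rewrite /gaussM => -[h1 h2]; apply/eqP; nia.
have [d0|/eqP d0] := eqVneq d gauss0; last by case: (gaussM_neq0 x0 d0).
by move: d0; rewrite [y]gaussE [w]gaussE /d /gauss0 => -[h1 h2]; congr pair; lia.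
Qed.

Lemma gaussXS x n : gaussX x n.+1 = gaussM x (gaussX x n). Proof. by []. Qed.

Lemma gaussNX x n : gaussN (gaussX x n) = (gaussN x ^ n)%N.
Proof. by elim: n => // n IH; rewrite gaussXS gaussNM IH expnS. Qed.

Lemma gaussX_neq0 x n : x <> gauss0 -> gaussX x n <> gauss0.
Proof. by move=> x0; elim: n => [|n IH] //; rewrite gaussXS; apply: gaussM_neq0. Qed.

Lemma gaussN_ind (P : gauss -> Prop) :
  (forall z, (forall y, (gaussN y < gaussN z)%N -> P y) -> P z) -> forall z, P z.
Proof.
move=> IH z; have [n] := ubnP (gaussN z); elim: n z => // n IHn z Hz.
by apply: IH => y Hy; apply: IHn; lia.
Qed.

Lemma gunitE u : gunit u <-> gaussN u = 1%N.
Proof.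
split=> [[v]|Nu1].
  by move/(congr1 gaussN); rewrite gaussNM => /eqP; rewrite muln_eq1 => /andP[/eqP].
exists (gaussConj u); move/(congr1 Posz): Nu1; rewrite gaussNzE /gaussNz => Nu1.
by rewrite /gaussM /gaussConj /gauss1 /=; congr pair; lia.
Qed.

Lemma gunit_cases u : gunit u ->
  [\/ u = (1, 0), u = (-1, 0), u = (0, 1) | u = (0, -1)].
Proof.
move/gunitE/(congr1 Posz); rewrite gaussNzE /gaussNz [u]gaussE /= => Nu1.
have : u.1 = 0 \/ u.1 = 1 \/ u.1 = -1 by nia.
have : u.2 = 0 \/ u.2 = 1 \/ u.2 = -1 by nia.
move=> [E2|[E2|E2]] [E1|[E1|E1]]; rewrite E1 E2 in Nu1 *;
  by [constructor 1 | constructor 2 | constructor 3 | constructor 4 | lia].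
Qed.

Lemma gdvd_refl x : gdvd x x. Proof. by exists gauss1; rewrite gaussM1. Qed.

Lemma gdvd_trans x y w : gdvd x y -> gdvd y w -> gdvd x w.
Proof. by case=> a -> [b ->]; exists (gaussM a b); rewrite gaussMA. Qed.

Lemma gdvd_mulIl x y : gdvd x (gaussM x y). Proof. by exists y. Qed.
Lemma gdvd_mulIr x y : gdvd x (gaussM y x). Proof. by exists y; rewrite gaussMC. Qed.

Lemma gdvd_mulr x y w : gdvd x y -> gdvd x (gaussM y w).
Proof. by move/gdvd_trans; apply; apply: gdvd_mulIl. Qed.
Lemma gdvd_mull x y w : gdvd x y -> gdvd x (gaussM w y).
Proof. by move/gdvd_trans; apply; apply: gdvd_mulIr. Qed.

Lemma gdvd_add x y w : gdvd x y -> gdvd x w -> gdvd x (gaussD y w).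
Proof. by case=> a -> [b ->]; exists (gaussD a b); gauss_ring. Qed.

Lemma gdvd0 x : gdvd x gauss0. Proof. by exists gauss0; rewrite gaussM0. Qed.

Lemma gdvd1 x : gdvd x gauss1 -> gunit x. Proof. by case=> y; exists y. Qed.

Lemma gdvd_unit x u : gunit u -> gdvd x u -> gunit x.
Proof. by case=> v Hv [y Ey]; exists (gaussM y v); rewrite gaussMA -Ey. Qed.

Lemma gdvd_leqN x y : y <> gauss0 -> gdvd x y -> (gaussN x <= gaussN y)%N.
Proof.
move=> y0 [c Ey]; rewrite Ey gaussNM leq_pmulr // gaussN_gt0 // => c0.
by apply: y0; rewrite Ey c0 gaussM0.
Qed.

Lemma gdvd_dvdN x y : gdvd x y -> (gaussN x %| gaussN y)%N.
Proof. by case=> c ->; rewrite gaussNM dvdn_mulr. Qed.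

Lemma gassoc_refl x : gassoc x x.
Proof. by exists gauss1; split; [apply/gunitE | rewrite gauss1M]. Qed.

Lemma gassoc_sym x y : gassoc x y -> gassoc y x.
Proof.
case=> u [[v Hv] ->]; exists v; split; first by exists u; rewrite gaussMC.
by rewrite gaussMA (gaussMC v) Hv gauss1M.
Qed.

Lemma gassoc_trans x y w : gassoc x y -> gassoc y w -> gassoc x w.
Proof.
case=> u [/gunitE Hu ->] [v [/gunitE Hv ->]]; exists (gaussM u v).
by split; [apply/gunitE; rewrite gaussNM Hu Hv | rewrite gaussMA].
Qed.

Lemma gassoc_mull c x y : gassoc x y -> gassoc (gaussM c x) (gaussM c y).
Proof. by case=> u [uu ->]; exists u; split; rewrite // !gaussMA (gaussMC u). Qed.

Lemma gassoc_mul2l c x y : c <> gauss0 ->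
  gassoc (gaussM c x) (gaussM c y) -> gassoc x y.
Proof.
move=> c0 [u [uu E]]; exists u; split=> //; apply: (gaussMI c0).
by rewrite E !gaussMA (gaussMC u).
Qed.

Lemma gassoc_dvd x y : gassoc x y -> gdvd y x.
Proof. by case=> u [_ ->]; apply: gdvd_mulIr. Qed.

Lemma gassoc_N x y : gassoc x y -> gaussN x = gaussN y.
Proof. by case=> u [/gunitE Nu ->]; rewrite gaussNM Nu mul1n. Qed.

Lemma divz_round (c n : int) : 0 < n -> exists q, -n <= 2 * (c - n * q) < n.
Proof.
move=> n0; exists ((2 * c + n) %/ (2 * n))%Z.
have := divz_eq (2 * c + n) (2 * n).
have : 0 <= ((2 * c + n) %% (2 * n))%Z by apply: modz_ge0; lia.
have : ((2 * c + n) %% (2 * n))%Z < 2 * n by apply: ltz_pmod; lia.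
lia.
Qed.

Lemma gauss_euclid a b : b <> gauss0 ->
  exists q r, a = gaussD (gaussM q b) r /\ (gaussN r < gaussN b)%N.
Proof.
move=> /gaussN_gt0; rewrite -ltz_nat gaussNzE; set n := gaussNz b => n0.
have [q1 Hq1] := divz_round (a.1 * b.1 + a.2 * b.2) n0.
have [q2 Hq2] := divz_round (a.2 * b.1 - a.1 * b.2) n0.
set r := gaussD a (gaussM (-1, 0) (gaussM (q1, q2) b)).
exists (q1, q2), r; split; first by gauss_ring.
(* [N r * N b = N (a * conj b - q * N b)], and both coordinates of
   [a * conj b - q * N b] are at most [N b / 2] in absolute value. *)
have Er : gaussNz r * n = (a.1 * b.1 + a.2 * b.2 - n * q1) ^+ 2
                        + (a.2 * b.1 - a.1 * b.2 - n * q2) ^+ 2.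
  by rewrite /gaussNz /r /n /gaussNz /gaussD /gaussM /=; ring.
rewrite -ltz_nat !gaussNzE -/n; have := gaussNzE r; nia.
Qed.

Lemma gbezout a b : exists d u v,
  [/\ gdvd d a, gdvd d b & d = gaussD (gaussM u a) (gaussM v b)].
Proof.
elim/gaussN_ind: b a => b IH a.
have [->|/eqP b0] := eqVneq b gauss0.
  by exists a, gauss1, gauss0; split; [apply: gdvd_refl | apply: gdvd0 | gauss_ring].
have [q [r [Ea Nr]]] := gauss_euclid a b0.
have [d [u [v [db dr Ed]]]] := IH r Nr b.
exists d, v, (gaussD u (gaussM (-1, 0) (gaussM v q))); split=> //.
  by rewrite Ea; apply: gdvd_add => //; apply: gdvd_mull.
by rewrite Ed Ea; gauss_ring.
Qed.

Lemma grelprimeP x y :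
  grelprime x y <-> exists u v, gauss1 = gaussD (gaussM u x) (gaussM v y).
Proof.
split=> [xy | [u [v E]] d [a Ha] [b Hb]].
  have [d [u [v [dx dy Ed]]]] := gbezout x y.
  have [w Ew] := xy d dx dy.
  by exists (gaussM w u), (gaussM w v); rewrite -Ew gaussMC Ed; gauss_ring.
by apply: gdvd1; rewrite E Ha Hb; exists (gaussD (gaussM u a) (gaussM v b)); gauss_ring.
Qed.

Lemma grelprime_sym x y : grelprime x y -> grelprime y x.
Proof. by move=> xy d dy dx; apply: xy. Qed.

Lemma grelprime_dvdl x y d : grelprime x y -> gdvd d x -> grelprime d y.
Proof. by move=> xy dx c cd cy; apply: xy (gdvd_trans cd dx) cy. Qed.

Lemma grelprime_dvdr x y d : grelprime x y -> gdvd d y -> grelprime x d.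
Proof. by move=> xy dy c cx cd; apply: xy cx (gdvd_trans cd dy). Qed.

Lemma grelprime1 x : grelprime gauss1 x.
Proof. by move=> d d1 _; apply: gdvd1. Qed.

Lemma grelprime_mulr a b c :
  grelprime a b -> grelprime a c -> grelprime a (gaussM b c).
Proof.
move=> /grelprimeP[u [v E]] /grelprimeP[u' [v' E']]; apply/grelprimeP.
exists (gaussD (gaussM (gaussM u u') a)
          (gaussD (gaussM u (gaussM v' c)) (gaussM v (gaussM b u')))),
       (gaussM v v').
by rewrite -[gauss1]gaussM1 {1}E E'; gauss_ring.
Qed.

Lemma grelprime_mull a b c :
  grelprime a c -> grelprime b c -> grelprime (gaussM a b) c.
Proof. by move=> ac bc; apply/grelprime_sym/grelprime_mulr; apply: grelprime_sym. Qed.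

Lemma Gauss_gdvdr a b c : grelprime a b -> gdvd a (gaussM b c) -> gdvd a c.
Proof.
move=> /grelprimeP[u [v E]] [w Ew]; exists (gaussD (gaussM c u) (gaussM v w)).
rewrite -[c]gaussM1 {1}E.
transitivity (gaussD (gaussM (gaussM c u) a) (gaussM v (gaussM b c))); first by gauss_ring.
by rewrite Ew; gauss_ring.
Qed.

Definition girred (p : gauss) := [/\ p <> gauss0, ~ gunit p &
  forall c e, p = gaussM c e -> gunit c \/ gunit e].

Lemma girred_prime p : girred p -> gprime p.
Proof.
case=> p0 pu irr; split=> //; split=> // a b pab.
have [g [u [v [[h Eh] ga Eg]]]] := gbezout p a.
case: (irr _ _ Eh) => [[w Ew]|[w Ew]].
  right; apply: Gauss_gdvdr pab; apply/grelprimeP.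
  by exists (gaussM w u), (gaussM w v); rewrite -Ew gaussMC Eg; gauss_ring.
by left; apply: gdvd_trans ga; exists w; rewrite Eh -gaussMA Ew gaussM1.
Qed.

Lemma gaussN_gt1 x : x <> gauss0 -> ~ gunit x -> (1 < gaussN x)%N.
Proof.
move=> /gaussN_gt0 x0 xu; rewrite ltn_neqAle eq_sym x0 andbT.
by apply/eqP => /gunitE.
Qed.

Lemma gprime_gt1 p : gprime p -> (1 < gaussN p)%N.
Proof. by case=> p0 [pu _]; apply: gaussN_gt1. Qed.

Lemma exists_gprime_dvd z : z <> gauss0 -> ~ gunit z ->
  exists p, gprime p /\ gdvd p z.
Proof.
elim/gaussN_ind: z => z IH z0 zu.
case: (excluded_middle_informative
        (exists c e, z = gaussM c e /\ ~ gunit c /\ ~ gunit e)) => [|irr].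
  case=> c [e [Ez [cu eu]]].
  have c0 : c <> gauss0 by move=> c0; apply: z0; rewrite Ez c0 gaussMC gaussM0.
  have e0 : e <> gauss0 by move=> e0; apply: z0; rewrite Ez e0 gaussM0.
  have Nc : (gaussN c < gaussN z)%N.
    by rewrite Ez gaussNM -{1}[gaussN c]muln1 ltn_pmul2l ?gaussN_gt1 ?gaussN_gt0.
  have [p [pp pc]] := IH c Nc c0 cu.
  by exists p; split=> //; rewrite Ez; apply: gdvd_mulr.
exists z; split; last exact: gdvd_refl.
apply: girred_prime; split=> // c e Ez.
case: (excluded_middle_informative (gunit c)) => cu; first by left.
case: (excluded_middle_informative (gunit e)) => eu; first by right.
by case: irr; exists c, e.
Qed.

Lemma gprime_dvdX p x n : gprime p -> gdvd p (gaussX x n) -> gdvd p x.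
Proof.
case=> p0 [pu pP]; elim: n => [/gdvd1 // | n IH].
by rewrite gaussXS => /pP[].
Qed.

Lemma gprime_dvd_gprime p r : gprime p -> gprime r -> gdvd r p -> gassoc r p.
Proof.
move=> [p0 [pu pP]] [r0 [ru _]] [c Ep].
have : gdvd p (gaussM r c) by rewrite -Ep; apply: gdvd_refl.
case/pP=> [[d Er]|[d Ec]].
  exists d; split; last by rewrite gaussMC.
  exists c; apply: (gaussMI p0).
  by rewrite gaussM1 gaussMA -Er -Ep.
case: ru; exists d; apply: (gaussMI p0).
by rewrite gaussM1 gaussMA (gaussMC p) -gaussMA -Ec -Ep.
Qed.

Lemma gprimeX_relprime p w e : gprime p -> ~ gdvd p w -> grelprime (gaussX p e) w.
Proof.
move=> pp pw d dpe dw.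
case: (excluded_middle_informative (gunit d)) => // du; exfalso.
have w0 : w <> gauss0 by move=> w0; apply: pw; rewrite w0; apply: gdvd0.
have d0 : d <> gauss0 by move=> d0; apply: w0; case: dw => y ->; rewrite d0 gaussMC gaussM0.
have [r [rp rd]] := exists_gprime_dvd d0 du.
have /gassoc_dvd pr := gprime_dvd_gprime pp rp (gprime_dvdX rp (gdvd_trans rd dpe)).
by apply: pw; apply: gdvd_trans pr (gdvd_trans rd dw).
Qed.

Lemma gprime_dvd_mulX q p e w : gprime q -> gprime p ->
  gdvd q (gaussM (gaussX p e) w) -> gdvd q w \/ gassoc q p.
Proof.
move=> qp pp; case: (qp) => _ [_ qP].
by case/qP=> [/(gprime_dvdX qp)/(gprime_dvd_gprime pp qp) | ]; auto.
Qed.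

Lemma gprime_factor_out p z : gprime p -> z <> gauss0 ->
  exists e w, z = gaussM (gaussX p e) w /\ ~ gdvd p w.
Proof.
move=> pp; elim/gaussN_ind: z => z IH z0.
case: (excluded_middle_informative (gdvd p z)) => [[y Ez] | pz]; last first.
  by exists 0%N, z; rewrite gauss1M.
have y0 : y <> gauss0 by move=> y0; apply: z0; rewrite Ez y0 gaussM0.
have Ny : (gaussN y < gaussN z)%N.
  by rewrite Ez gaussNM -{1}[gaussN y]mul1n ltn_pmul2r ?gprime_gt1 ?gaussN_gt0.
have [e [w [Ey pw]]] := IH y Ny y0.
by exists e.+1, w; split=> //; rewrite Ez Ey gaussXS gaussMA.
Qed.

Lemma gprime_one_plus_i : gprime one_plus_i.
Proof.
apply: girred_prime; split=> // [/gunitE // | c e Ec].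
have Nce : (gaussN c * gaussN e = 2)%N by rewrite -gaussNM -Ec.
have : gaussN c = 1%N \/ gaussN e = 1%N by nia.
by case=> /gunitE; auto.
Qed.

Definition gnormA (x : gauss) : gauss :=
  if (0 < x.1) && (0 <= x.2) then x
  else if (0 < x.2) && (x.1 <= 0) then gaussM (0, -1) x
  else if (x.1 < 0) && (x.2 <= 0) then gaussM (-1, 0) x
  else gaussM (0, 1) x.

Lemma gnormA_inA x : x <> gauss0 -> inA (gnormA x).
Proof.
move=> x0; have : ~ (x.1 = 0 /\ x.2 = 0) by case=> h1 h2; apply: x0; rewrite [x]gaussE h1 h2.
rewrite /gnormA /inA /gaussM /=.
case: ifP => [/andP[h1 h2] | /negbT H1]; first by split.
case: ifP => [/andP[h1 h2] | /negbT H2] /=; first by split; lia.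
case: ifP => [/andP[h1 h2] | /negbT H3] /=; first by split; lia.
move: H1 H2 H3; rewrite !negb_and -!ltNge -!leNgt => H1 H2 H3 x00.
by case/orP: H1 => H1; case/orP: H2 => H2; case/orP: H3 => H3; split; lia.
Qed.

Lemma gnormA_assoc x : gassoc (gnormA x) x.
Proof.
rewrite /gnormA; case: ifP => _; first exact: gassoc_refl.
by case: ifP => _; last case: ifP => _; eexists; (split; last reflexivity); apply/gunitE.
Qed.

Lemma inA_neq0 x : inA x -> x <> gauss0.
Proof. by case=> x1 _ x0; move: x1; rewrite x0. Qed.

Lemma inA_assoc_eq x y : inA x -> inA y -> gassoc x y -> x = y.
Proof.
move=> [x1 x2] [y1 y2] [u [/gunit_cases uU Ex]]; move: x1 x2; rewrite Ex [y]gaussE.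
by case: uU => ->; rewrite /gaussM /= => x1 x2; [congr pair; ring | exfalso; lia ..].
Qed.

Definition gudvd (x z : gauss) := exists y, z = gaussM x y /\ grelprime x y.

Lemma gudvd_assoc x x' z : gudvd x z -> gassoc x' x -> gudvd x' z.
Proof.
case=> y [Ez xy] [u [[v uv] Ex]]; exists (gaussM v y); split.
  rewrite Ez Ex; transitivity (gaussM (gaussM u v) (gaussM x y)); last by gauss_ring.
  by rewrite uv gauss1M.
apply: grelprime_dvdl (grelprime_dvdr xy _) _.
  by exists u; rewrite (gaussMC v y) -gaussMA (gaussMC v u) uv gaussM1.
by exists v; rewrite Ex (gaussMC u) -gaussMA uv gaussM1.
Qed.

Lemma decPE (P : Prop) : Defs.decP P = true <-> P.
Proof. by rewrite /Defs.decP; case: (excluded_middle_informative P). Qed.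

Definition box (n : nat) : seq gauss :=
  [seq ((a : nat)%:Z, (b : nat)%:Z) | a <- index_iota 0 n.+1, b <- index_iota 0 n.+1].

Lemma box_uniq n : uniq (box n).
Proof.
apply: allpairs_uniq; try exact: iota_uniq.
by move=> [a b] [c d] _ _ /= [h1 h2]; congr pair; lia.
Qed.

Lemma delta2star_box z : delta2star z =
  (\sum_(x <- box (gaussN z) | Defs.decP (diamond x z)) gaussN x)%N.
Proof.
rewrite big_mkcond /box big_allpairs_dep big_mkord.
by apply: eq_bigr => a _; rewrite big_mkord.
Qed.

Lemma diamond_in_box x z : z <> gauss0 -> diamond x z -> x \in box (gaussN z).
Proof.
move=> z0 [[x1 x2] [y [Ez _]]].
have : (gaussN x <= gaussN z)%N by apply: gdvd_leqN z0 _; exists y.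
rewrite -lez_nat !gaussNzE /gaussNz => Nxz.
have -> : x = ((absz x.1 : nat)%:Z, (absz x.2 : nat)%:Z).
  by rewrite [x]gaussE /=; congr pair; lia.
have [h1 h2] : x.1 <= x.1 * x.1 /\ x.2 <= x.2 * x.2 by nia.
have := gaussNzE z; rewrite /gaussNz => Nz.
by apply: allpairs_f; rewrite mem_index_iota; lia.
Qed.

Lemma diamond_enum z : z <> gauss0 ->
  exists2 U : seq gauss, uniq U & forall x, x \in U <-> diamond x z.
Proof.
move=> z0; exists [seq x <- box (gaussN z) | Defs.decP (diamond x z)].
  exact/filter_uniq/box_uniq.
move=> x; rewrite mem_filter; split=> [/andP[/decPE] // | xz].
by rewrite (diamond_in_box z0 xz) andbT; apply/decPE.
Qed.

Lemma delta2star_enum z U : z <> gauss0 -> uniq U ->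
  (forall x, x \in U <-> diamond x z) -> delta2star z = (\sum_(x <- U) gaussN x)%N.
Proof.
move=> z0 Uu UE; rewrite delta2star_box -big_filter.
apply: perm_big; apply: uniq_perm; [exact/filter_uniq/box_uniq | exact: Uu |].
move=> x; rewrite mem_filter; apply/andP/idP => [[/decPE /UE] // | /UE xz].
by split; [apply/decPE | apply: diamond_in_box].
Qed.

Section PrimePowerFactor.

Variables (p w : gauss) (e : nat).
Hypotheses (pp : gprime p) (pw : ~ gdvd p w) (e_gt0 : (0 < e)%N).

Local Notation P := (gaussX p e).

Let P0 : P <> gauss0. Proof. by apply: gaussX_neq0; case: pp. Qed.
Let w0 : w <> gauss0. Proof. by move=> w0; apply: pw; rewrite w0; apply: gdvd0. Qed.
Let Pw : grelprime P w. Proof. exact: gprimeX_relprime. Qed.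
Let pP : gdvd p P. Proof. by case: e e_gt0 => // n _; apply: gdvd_mulIl. Qed.

Lemma gudvd_mulX_split x : gudvd x (gaussM P w) ->
  (~ gdvd p x /\ gudvd x w) \/ exists2 d, gudvd d w & x = gaussM P d.
Proof.
case=> y [Ew xy]; case: (excluded_middle_informative (gdvd p x)) => px.
  right; have py : ~ gdvd p y by case: pp => _ [pu _] py; apply: pu; apply: xy.
  have : gdvd P (gaussM y x) by rewrite gaussMC -Ew; apply: gdvd_mulIl.
  case/(Gauss_gdvdr (gprimeX_relprime (e := e) pp py)) => d Ex; exists d => //.
  exists y; split; last by apply: grelprime_dvdl xy _; rewrite Ex; apply: gdvd_mulIr.
  by apply: (gaussMI P0); rewrite Ew Ex gaussMA.
left; split=> //.
have : gdvd P (gaussM x y) by rewrite -Ew; apply: gdvd_mulIl.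
case/(Gauss_gdvdr (gprimeX_relprime (e := e) pp px)) => y' Ey; exists y'; split.
  by apply: (gaussMI P0); rewrite Ew Ey !gaussMA (gaussMC x).
by apply: grelprime_dvdr xy _; rewrite Ey; apply: gdvd_mulIr.
Qed.

Lemma gudvd_mulX_l d : gudvd d w -> gudvd d (gaussM P w).
Proof.
case=> y [Ew dy]; exists (gaussM P y); split; first by rewrite Ew !gaussMA (gaussMC P).
apply: grelprime_mulr dy; apply: grelprime_sym; apply: grelprime_dvdr Pw _.
by rewrite Ew; apply: gdvd_mulIl.
Qed.

Lemma gudvd_mulX d : gudvd d w -> gudvd (gaussM P d) (gaussM P w).
Proof.
case=> y [Ew dy]; exists y; split; first by rewrite Ew gaussMA.
by apply: grelprime_mull dy; apply: grelprime_dvdr Pw _; rewrite Ew; apply: gdvd_mulIr.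
Qed.

Local Notation f d := (gnormA (gaussM P d)).

Lemma diamond_mulX x :
  diamond x (gaussM P w) <-> diamond x w \/ exists2 d, diamond d w & x = f d.
Proof.
split=> [[xA /gudvd_mulX_split[[_ xw] | [d dw Ex]]] | ]; first by left.
  have d0 : d <> gauss0 by move=> d0; apply: (inA_neq0 xA); rewrite Ex d0 gaussM0.
  have d'A := gnormA_inA d0; set d' := gnormA d in d'A *.
  right; exists d'; first by split=> //; apply: gudvd_assoc dw (gnormA_assoc d).
  apply: inA_assoc_eq xA (gnormA_inA (gaussM_neq0 P0 (inA_neq0 d'A))) _.
  apply: gassoc_trans (gassoc_sym (gnormA_assoc _)).
  by rewrite Ex; apply/gassoc_mull/gassoc_sym/gnormA_assoc.
case=> [[xA xw] | [d [dA dw] ->]]; first by split=> //; apply: gudvd_mulX_l.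
split; first exact/gnormA_inA/gaussM_neq0/inA_neq0.
exact: gudvd_assoc (gudvd_mulX dw) (gnormA_assoc _).
Qed.

Lemma delta2star_mulX :
  delta2star (gaussM P w) = ((1 + gaussN p ^ e) * delta2star w)%N.
Proof.
have [U Uu UE] := diamond_enum w0.
have Pw0 : gaussM P w <> gauss0 by apply: gaussM_neq0.
have f_notin d : f d \notin U.
  apply/negP => /UE[_ [y [Ew _]]]; apply: pw; rewrite Ew; apply/gdvd_mulr/(gdvd_trans pP).
  exact/(gdvd_trans (gdvd_mulIl P d))/gassoc_dvd/gnormA_assoc.
have f_inj : {in U &, injective (fun d => f d)}.
  move=> d1 d2 /UE[d1A _] /UE[d2A _] Ef.
  apply: inA_assoc_eq d1A d2A _; apply: (gassoc_mul2l P0).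
  by apply: gassoc_trans (gassoc_sym (gnormA_assoc _)) _; rewrite Ef; apply: gnormA_assoc.
rewrite (delta2star_enum w0 Uu UE) (@delta2star_enum _ (U ++ [seq f d | d <- U])) //.
- rewrite big_cat big_map mulnDl mul1n big_distrr; congr addn.
  by apply: eq_bigr => d _; rewrite (gassoc_N (gnormA_assoc _)) gaussNM gaussNX.
- rewrite cat_uniq map_inj_in_uniq // Uu andbT /=.
  by apply/hasPn => _ /mapP[d dU ->]; apply: f_notin.
- move=> x; rewrite mem_cat diamond_mulX; split.
    by case/orP=> [/UE | /mapP[d /UE dw ->]]; [left | right; exists d].
  by case=> [/UE -> // | [d /UE dU ->]]; apply/orP; right; apply: map_f.
Qed.

End PrimePowerFactor.

Lemma delta2star_unit z : gunit z -> delta2star z = 1%N.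
Proof.
move=> zu; have z0 : z <> gauss0 by move=> z0; move: zu; rewrite z0 => /gunitE.
rewrite (@delta2star_enum z [:: gauss1]) ?big_seq1 // => x; rewrite inE; split.
  by move/eqP ->; split; [split | exists z; split; [rewrite gauss1M | apply: grelprime1]].
move=> [xA [y [Ez _]]]; apply/eqP; apply: inA_assoc_eq => //.
by exists x; split; [apply: gdvd_unit zu _; rewrite Ez; apply: gdvd_mulIl | rewrite gaussM1].
Qed.

Lemma int_parity (a : int) : exists a' r, a = 2 * a' + r /\ (r = 0 \/ r = 1).
Proof.
exists (a %/ 2)%Z, (a %% 2)%Z; have := divz_eq a 2.
have : 0 <= (a %% 2)%Z by apply: modz_ge0.
have : (a %% 2)%Z < 2 by apply: ltz_pmod.
lia.
Qed.

Lemma gaussN_odd_mod4 x : odd (gaussN x) -> gaussN x = 1 %[mod 4].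
Proof.
move=> Nx_odd; have := odd_double_half (gaussN x); rewrite Nx_odd.
have := gaussNzE x; rewrite /gaussNz.
have [a [ra [-> Ra]]] := int_parity x.1; have [b [rb [-> Rb]]] := int_parity x.2.
by case: Ra => ->; case: Rb => ->; lia.
Qed.

Lemma gaussN_even_dvd x : ~~ odd (gaussN x) -> gdvd one_plus_i x.
Proof.
move=> Nx_even; have := odd_double_half (gaussN x); rewrite (negbTE Nx_even) add0n.
have := gaussNzE x; rewrite /gaussNz [x]gaussE /=.
have [a [ra [-> Ra]]] := int_parity x.1; have [b [rb [-> Rb]]] := int_parity x.2.
move=> Nx Nx2; have rab : ra = rb by case: Ra => Ra; case: Rb => Rb; subst; lia.
by exists (a + b + ra, b - a); rewrite /gaussM /one_plus_i /= -rab; congr pair; ring.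
Qed.

Lemma half_succ_expn_odd n e : n = 1 %[mod 4] ->
  exists2 o, (1 + n ^ e = o.*2)%N & odd o.
Proof.
move=> n1; have : (n ^ e %% 4 = 1)%N by rewrite -modnXm n1 exp1n.
exists ((n ^ e %/ 4).*2 + 1)%N; last by rewrite addn1 /= odd_double.
by have := divn_eq (n ^ e) 4; lia.
Qed.

Lemma logn2_mul_odd k n : (0 < k)%N -> odd n -> logn 2 (k * n) = logn 2 k.
Proof.
move=> k0 n_odd; have n0 : (0 < n)%N by case: n n_odd.
by rewrite lognM // (@logn_coprime 2 n) ?addn0 // coprime2n.
Qed.

Definition odd_prime_divisors (z : gauss) (s : seq gauss) :=
  [/\ forall q, q \in s -> [/\ gprime q, gdvd q z & odd (gaussN q)],
      forall i j, (i < size s)%N -> (j < size s)%N -> i <> j ->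
        ~ gassoc (nth gauss0 s i) (nth gauss0 s j) &
      forall q, gprime q -> gdvd q z -> odd (gaussN q) ->
        exists2 r, r \in s & gassoc q r].

Lemma odd_prime_divisors_unit z : gunit z -> odd_prime_divisors z [::].
Proof. by move=> zu; split=> // q [_ [qu _]] /(gdvd_unit zu). Qed.

Section OddPrimeDivisorsMulX.

Variables (p w : gauss) (e : nat) (s : seq gauss).
Hypotheses (pp : gprime p) (pw : ~ gdvd p w) (ws : odd_prime_divisors w s).

Local Notation z := (gaussM (gaussX p e) w).

Let wz : gdvd w z. Proof. exact: gdvd_mulIr. Qed.

Lemma odd_prime_divisors_mulX_even :
  ~~ odd (gaussN p) -> odd_prime_divisors z s.
Proof.
move=> Np_even; case: ws => sP s_nassoc s_cover; split=> // [q qs | q qp qz Nq_odd].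
  by have [qp qw Nq_odd] := sP q qs; split=> //; apply: gdvd_trans wz.
case: (gprime_dvd_mulX qp pp qz) => [qw | /gassoc_N Nqp]; first exact: s_cover.
by move: Nq_odd; rewrite Nqp (negbTE Np_even).
Qed.

Lemma odd_prime_divisors_mulX_odd : (0 < e)%N ->
  odd (gaussN p) -> odd_prime_divisors z (p :: s).
Proof.
move=> e_gt0 Np_odd; case: ws => sP s_nassoc s_cover; split.
- move=> q; rewrite inE => /predU1P[-> | qs].
    by split=> //; case: e e_gt0 => // n _; apply/gdvd_mulr/gdvd_mulIl.
  by have [qp qw Nq_odd] := sP q qs; split=> //; apply: gdvd_trans wz.
- have p_nassoc q : q \in s -> ~ gassoc p q.
    move=> qs /gassoc_sym/gassoc_dvd pq; have [_ qw _] := sP q qs.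
    by apply: pw (gdvd_trans pq qw).
  move=> [|i] [|j] //= i_lt j_lt ij; first by apply/p_nassoc/mem_nth.
    by move/gassoc_sym; apply/p_nassoc/mem_nth.
  by apply: s_nassoc => // ij'; apply: ij; rewrite ij'.
- move=> q qp qz Nq_odd; case: (gprime_dvd_mulX qp pp qz) => [qw | qp_assoc].
    by have [r rs qr] := s_cover q qp qw Nq_odd; exists r; rewrite ?inE ?rs ?orbT.
  by exists p; rewrite ?inE ?eqxx.
Qed.

End OddPrimeDivisorsMulX.

Lemma delta2star_odd_prime_divisors z : z <> gauss0 ->
  exists s m, [/\ odd_prime_divisors z s, delta2star z = (2 ^ size s * m)%N & odd m].
Proof.
elim/gaussN_ind: z => z IH z0.
case: (excluded_middle_informative (gunit z)) => zu.
  by exists [::], 1%N; rewrite delta2star_unit //; split=> //; apply: odd_prime_divisors_unit.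
have [p [pp pz]] := exists_gprime_dvd z0 zu.
have [e [w [Ez pw]]] := gprime_factor_out pp z0.
have e_gt0 : (0 < e)%N by case: e Ez => // Ez; case: pw; rewrite -[w]gauss1M -Ez.
have w0 : w <> gauss0 by move=> w0; apply: z0; rewrite Ez w0 gaussM0.
have Nw : (gaussN w < gaussN z)%N.
  rewrite Ez gaussNM gaussNX ltn_Pmull ?gaussN_gt0 //.
  by rewrite -[1%N](expn0 (gaussN p)) ltn_exp2l ?gprime_gt1.
have [s [m [ws Dw m_odd]]] := IH w Nw w0.
rewrite Ez delta2star_mulX // Dw.
have [Np_odd | Np_even] := boolP (odd (gaussN p)).
  have [o Eo o_odd] := half_succ_expn_odd e (gaussN_odd_mod4 Np_odd).
  exists (p :: s), (o * m)%N; split; rewrite ?oddM ?o_odd //.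
    exact: odd_prime_divisors_mulX_odd.
  by rewrite Eo /= expnS -doubleMl -mul2n; ring.
exists s, ((1 + gaussN p ^ e) * m)%N; split.
- exact: odd_prime_divisors_mulX_even.
- by rewrite mulnCA.
- by rewrite oddM m_odd oddD oddX (negbTE Np_even) orbF (gtn_eqF e_gt0).
Qed.

Lemma num_prime_divisors_odd_part g x s : odd (gaussN x) ->
  odd_prime_divisors (gaussM (gaussX one_plus_i g) x) s -> num_prime_divisors x (size s).
Proof.
move=> Nx_odd [sP s_nassoc s_cover]; exists s; split=> //; split; last split=> //.
  move=> q qs; have [qp qz Nq_odd] := sP q qs; split=> //.
  case: (gprime_dvd_mulX qp gprime_one_plus_i qz) => // /gassoc_N Nq2.
  by move: Nq_odd; rewrite Nq2.
move=> q qp qx; apply: s_cover => //; first exact: gdvd_mull.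
exact: dvdn_odd (gdvd_dvdN qx) Nx_odd.
Qed.

Lemma delta2star_I2star z t : z <> gauss0 -> I2star z = t%:R ->
  delta2star z = (t * gaussN z)%N.
Proof.
move=> /gaussN_gt0 Nz It; apply/eqP; rewrite -(eqr_nat rat) natrM -It /I2star mulfVK //.
by rewrite pnatr_eq0 -lt0n.
Qed.

Theorem theorem2p3 (z : gauss) (t : nat) :
  z <> gauss0 -> (2 <= t)%N -> I2star z = t%:R ->
  (exists (gamma : nat) (x : gauss),
      z = gaussM (gaussX one_plus_i gamma) x /\ odd (gaussN x)) /\
  (forall (gamma : nat) (x : gauss),
      z = gaussM (gaussX one_plus_i gamma) x -> odd (gaussN x) ->
      num_prime_divisors x (gamma + logn 2 t)).
Proof.
move=> z0 t_ge2 It; split.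
  have [g [x [Ez ix]]] := gprime_factor_out gprime_one_plus_i z0.
  exists g, x; split=> //.
  by case: (boolP (odd (gaussN x))) => // /gaussN_even_dvd.
move=> g x Ez Nx_odd.
have [s [m [zs Dz m_odd]]] := delta2star_odd_prime_divisors z0.
suff -> : (g + logn 2 t)%N = size s.
  by rewrite Ez in zs; apply: num_prime_divisors_odd_part zs.
have : (2 ^ g * t * gaussN x = 2 ^ size s * m)%N.
  by rewrite -Dz (delta2star_I2star z0 It) Ez gaussNM gaussNX; ring.
have t_gt0 : (0 < t)%N by apply: leq_trans t_ge2.
move/(congr1 (logn 2)); rewrite !(logn2_mul_odd _ Nx_odd, logn2_mul_odd _ m_odd);
  rewrite ?muln_gt0 ?expn_gt0 ?t_gt0 //.
by rewrite lognM ?expn_gt0 // !pfactorK.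
Qed.
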